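(* Let $G=(V,P,d)$ be a reversible metric Markov chain with $d$ the combinatorial distance and $m(V)=1$. Then \[ h\le\frac{57\,\mathrm{Deg}_{\max}}{\operatorname{diam}_{\operatorname{obs}}^{(1/8)}}. \]
   Context: $V$ finite; $P:V\times V\to[0,\infty)$ with symmetric support, connected; $x\sim y$ iff $x\ne y$, $P(x,y)>0$; $d(x,y)$ is the minimal number of edges on a path from $x$ to $y$; $m$ the probability with $m(x)P(x,y)=m(y)P(y,x)$. $|\partial W|=\sum_{x\in W,y\notin W}P(x,y)m(x)d(x,y)$; $h=\inf\{|\partial W|/m(W):W\neq\emptyset,\ m(W)\le\frac12\}$. $\mathrm{Deg}_{\max}=\max_x\sum_{y\ne x}P(x,y)$. $\operatorname{cl}(B)=B\cup\{x:x\sim y\text{ for some }y\in B\}$; $\operatorname{diam}_{\operatorname{obs}}^{(\varepsilon)}=\sup\{d(A,B):m(A)\ge\varepsilon,\ m(\operatorname{cl}(B))\ge\varepsilon\}$ with $d(A,B)=\min_{a\in A,b\in B}d(a,b)$. *)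

From HB Require Import structures.
From mathcomp Require Import all_boot all_order all_algebra.
From mathcomp Require Import all_classical all_reals ereal.
Set Implicit Arguments. Unset Strict Implicit. Unset Printing Implicit Defensive.
Import Order.TTheory GRing.Theory Num.Theory.
Local Open Scope ring_scope.

Section MetricMarkov.
Variables (R : realType) (V : finType) (P : V -> V -> R).

Definition adj : rel V := fun x y => (x != y) && (0 < P x y).

Fixpoint within (n : nat) (x y : V) : bool :=
  match n with
  | 0 => x == y
  | n'.+1 => within n' x y || [exists z, within n' x z && adj z y]
  end.

(* combinatorial distance: minimal number of edges on a path from x to y
   (in a connected graph it is < #|V|; the default #|V| is never used then) *)
Definition dist (x y : V) : nat :=
  \big[minn/#|V|]_(n < #|V| | within n x y) n.

(* d(A,B) = min_{a in A, b in B} d(a,b)  (only used for nonempty A, B) *)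
Definition setdist (A B : {set V}) : nat :=
  \big[minn/#|V|]_(a in A) \big[minn/#|V|]_(b in B) dist a b.

Definition mass (m : V -> R) (W : {set V}) : R := \sum_(x in W) m x.

Definition bnd (m : V -> R) (W : {set V}) : R :=
  \sum_(x in W) \sum_(y in ~: W) P x y * m x * (dist x y)%:R.

Definition cheeger (m : V -> R) : \bar R :=
  ereal_inf [set ((bnd m W / mass m W)%:E) | W in
              [set W : {set V} | W != finset.set0 /\ mass m W <= 2^-1]].

Definition degmax : R := \big[Num.max/0]_x \sum_(y | y != x) P x y.

Definition cl (B : {set V}) : {set V} :=
  B :|: [set x | [exists y in B, adj x y]].

(* observable diameter: sup{ d(A,B) : m(A) >= eps, m(cl B) >= eps }
   (a finite, nonempty family of naturals, so the sup is a max) *)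
Definition diam_obs (m : V -> R) (eps : R) : nat :=
  \max_(AB : {set V} * {set V} | (eps <= mass m AB.1) && (eps <= mass m (cl AB.2)))
     setdist AB.1 AB.2.

End MetricMarkov.

From Pilot Require Import Defs.
From HB Require Import structures.
From mathcomp Require Import all_boot all_order all_algebra.
From mathcomp Require Import all_classical all_reals ereal.
From mathcomp Require Import lra zify.
Set Implicit Arguments. Unset Strict Implicit.
Import Order.TTheory GRing.Theory Num.Theory.
Local Open Scope ring_scope.

(* Let D = d(A, B) realise the observable diameter, and let W_r be the set of
   points at distance at most r from A.  For r < D - 1, W_r contains A and
   misses cl(B), so its mass lies in [1/8, 7/8] and h <= 8 |dW_r|.  An edge
   leaving W_r has length 1 and goes from level r to level r + 1, so the
   boundaries of W_0, ..., W_(D-2) are carried by disjoint sets of edges and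
   their sum is at most sum_x m(x) deg(x) <= Deg_max.  Some |dW_r| is thus at
   most Deg_max / (D - 1), whence h <= 8 Deg_max / (D - 1) <= 16 Deg_max / D.
   When D = 1, a single vertex of mass at most 1/2 gives h <= Deg_max. *)

Local Notation within := Defs.within.

Lemma bigmin_leq {I : eqType} {r : seq I} {Pr : pred I} {F : I -> nat} {d j} :
  j \in r -> Pr j -> (\big[minn/d]_(i <- r | Pr i) F i <= F j)%N.
Proof.
elim: r => // a r IH; rewrite inE big_cons => /orP [/eqP <- | hj] hp.
- by rewrite hp geq_min leqnn.
- by case: ifP => _; [rewrite geq_min IH ?orbT | apply: IH].
Qed.

Lemma bigmin_leq_idx (I : Type) (r : seq I) (Pr : pred I) (F : I -> nat) d :
  (\big[minn/d]_(i <- r | Pr i) F i <= d)%N.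
Proof.
elim: r => [|a r IH]; rewrite ?big_nil ?big_cons //.
by case: ifP; rewrite ?geq_min IH ?orbT.
Qed.

Lemma leq_bigmin (I : Type) (r : seq I) (Pr : pred I) (F : I -> nat) d k :
  (k <= d)%N -> (forall i, Pr i -> k <= F i)%N ->
  (k <= \big[minn/d]_(i <- r | Pr i) F i)%N.
Proof.
move=> hd hF; apply: (big_ind (fun n => k <= n)%N) => // a b ha hb.
by rewrite leq_min ha hb.
Qed.

Lemma exists_ord_le_mean (R : realFieldType) n (F : 'I_n -> R) c :
  (0 < n)%N -> \sum_(i < n) F i <= c -> exists i, F i <= c / n%:R.
Proof.
move=> n_gt0 hsum; apply/existsP; apply: contraT; rewrite negb_exists => /forallP hF.
suff : c < \sum_(i < n) F i by rewrite ltNge hsum.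
have n_neq0 : n%:R != 0 :> R by rewrite pnatr_eq0 -lt0n.
have {1}-> : c = \sum_(i < n) (c / n%:R).
  by rewrite sumr_const card_ord -(mulr_natr (c / n%:R)) divfK.
apply: ltr_sum => [|i _]; last by rewrite ltNge hF.
by apply/hasP; exists (Ordinal n_gt0); rewrite ?mem_index_enum.
Qed.

Section Distance.
Variables (R : realType) (V : finType) (P : V -> V -> R).

Lemma dist_le_card x y : (dist P x y <= #|V|)%N.
Proof. exact: bigmin_leq_idx. Qed.

Lemma dist_le_within n x y : (n < #|V|)%N -> within P n x y -> (dist P x y <= n)%N.
Proof. by move=> hn hw; apply: (bigmin_leq (mem_index_enum (Ordinal hn)) hw). Qed.

Lemma dist_gt0 x y : x != y -> (0 < dist P x y)%N.
Proof.
move=> hxy; apply: leq_bigmin => [|[[|n] hn] //=]; first by apply/card_gt0P; exists x.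
by rewrite (negbTE hxy).
Qed.

Lemma dist_xx x : dist P x x = 0%N.
Proof.
apply/eqP; rewrite -leqn0; apply: dist_le_within; last exact: eqxx.
by apply/card_gt0P; exists x.
Qed.

Lemma dist_adj x y : adj P x y -> dist P x y = 1%N.
Proof.
move=> hxy; have x_neq_y : x != y by case/andP: hxy.
apply/anti_leq; rewrite dist_gt0 // andbT; apply: dist_le_within.
  by apply/card_gt1P; exists x, y.
by apply/orP; right; apply/existsP; exists x; rewrite /= eqxx hxy.
Qed.

Lemma dist_adj_le a x y : adj P x y -> (dist P a y <= (dist P a x).+1)%N.
Proof.
move=> hxy; suff : ((dist P a y).-1 <= dist P a x)%N by lia.
apply: leq_bigmin => [|i hi]; first by have := dist_le_card a y; lia.
have [hiV | ] := ltnP i.+1 #|V|; last by have := dist_le_card a y; lia.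
suff : (dist P a y <= i.+1)%N by lia.
by apply: dist_le_within => //; apply/orP; right; apply/existsP; exists x; apply/andP.
Qed.

Definition dist_to (A : {set V}) x : nat := \big[minn/#|V|]_(a in A) dist P a x.

Lemma dist_to_le_card (A : {set V}) x : (dist_to A x <= #|V|)%N.
Proof. exact: bigmin_leq_idx. Qed.

Lemma dist_to_le (A : {set V}) a x : a \in A -> (dist_to A x <= dist P a x)%N.
Proof. by move=> ha; apply: bigmin_leq; rewrite ?mem_index_enum. Qed.

Lemma dist_to_mem (A : {set V}) a : a \in A -> dist_to A a = 0%N.
Proof. by move=> ha; apply/eqP; rewrite -leqn0 -(dist_xx a) dist_to_le. Qed.

Lemma dist_to_adj_le (A : {set V}) x y : adj P x y -> (dist_to A y <= (dist_to A x).+1)%N.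
Proof.
move=> hxy; suff : ((dist_to A y).-1 <= dist_to A x)%N by lia.
apply: leq_bigmin => [|a ha]; first by have := dist_to_le_card A y; lia.
have := dist_to_le y ha; have := dist_adj_le a hxy; lia.
Qed.

Lemma setdist_le_dist_to (A B : {set V}) b : b \in B -> (setdist P A B <= dist_to A b)%N.
Proof.
move=> hb; apply: (big_ind2 (fun u v => u <= v)%N) => //.
- by move=> u1 u2 v1 v2 h1 h2; rewrite leq_min !geq_min h1 h2 orbT.
- by move=> a _; apply: bigmin_leq; rewrite ?mem_index_enum.
Qed.

Lemma setdist_le_dist_to_cl (A B : {set V}) z :
  z \in cl P B -> (setdist P A B <= (dist_to A z).+1)%N.
Proof.
rewrite !inE => /orP [hz | /existsP [y /andP [hy hzy]]].
  exact: leqW (setdist_le_dist_to A hz).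
exact: leq_trans (setdist_le_dist_to A hy) (dist_to_adj_le A hzy).
Qed.

Lemma setdist_setC_gt0 (A : {set V}) : (0 < #|V|)%N -> (0 < setdist P A (~: A))%N.
Proof.
move=> V_gt0; apply: leq_bigmin => // a ha; apply: leq_bigmin => // b hb.
by apply: dist_gt0; apply: contraTneq hb => <-; rewrite inE ha.
Qed.

Lemma cl_setC1 a : (exists y, adj P a y) -> cl P (~: [set a]) = [set: V].
Proof.
move=> [y hay]; apply/setP => x; rewrite !inE.
have [-> | //] := eqVneq x a; apply/existsP; exists y.
by rewrite !inE hay andbT eq_sym; case/andP: hay.
Qed.

Definition sublevel (A : {set V}) r := [set x | (dist_to A x <= r)%N].

Lemma subset_sublevel (A : {set V}) r : A \subset sublevel A r.
Proof. by apply/fintype.subsetP => x hx; rewrite inE dist_to_mem. Qed.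

Lemma sublevel_subset_setC_cl (A B : {set V}) r :
  (r.+1 < setdist P A B)%N -> sublevel A r \subset ~: cl P B.
Proof.
move=> hr; apply/fintype.subsetP => x; rewrite inE finset.in_setC => hx.
by apply/negP => hcl; have := setdist_le_dist_to_cl A hcl; lia.
Qed.

Lemma sublevel_boundary_edge (A : {set V}) r x y :
  x \in sublevel A r -> y \notin sublevel A r -> 0 < P x y -> dist_to A x = r.
Proof.
move=> hx hy hxy; have x_neq_y : x != y by apply: contraNneq hy => <-.
have := dist_to_adj_le A (introT andP (conj x_neq_y hxy)).
by move: hx hy; rewrite !inE; lia.
Qed.

End Distance.

Section Mass.
Variables (R : realType) (V : finType) (m : V -> R).
Hypotheses (Hm0 : forall x, 0 <= m x) (Hm1 : \sum_x m x = 1).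

Lemma mass_setT : mass m [set: V] = 1.
Proof. by rewrite -Hm1; apply: eq_bigl => x; rewrite inE. Qed.

Lemma mass_setC W : mass m (~: W) = 1 - mass m W.
Proof.
apply/eqP; rewrite eq_sym subr_eq -Hm1 /mass (bigID (mem W)) /= addrC.
by apply/eqP; congr (_ + _); apply: eq_bigl => x; rewrite !inE.
Qed.

Lemma mass_subset (A W : {set V}) : A \subset W -> mass m A <= mass m W.
Proof.
move=> /fintype.subsetP AW; rewrite /mass [leLHS]big_mkcond [leRHS]big_mkcond.
by apply: ler_sum => x _; case: ifP => [/AW -> | _] //; case: ifP.
Qed.

Lemma minimal_heavy_set eps : eps <= 1 ->
  exists2 A : {set V}, eps <= mass m A & forall a, a \in A -> mass m (A :\ a) < eps.
Proof.
rewrite -mass_setT => hT.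
have [A hA hmin] := @arg_minnP _ [set: V] (fun A => eps <= mass m A) (fun A => #|A|) hT.
exists A => // a ha; rewrite ltNge; apply/negP => /hmin.
by move: (cardsD1 a A); rewrite ha /=; lia.
Qed.

Lemma mass_gt0_neq0 W : 0 < mass m W -> W != finset.set0.
Proof. by apply: contraTneq => ->; rewrite /mass big_set0 ltxx. Qed.

End Mass.

Lemma sumr_ord_eq_le (R : numDomainType) n k (c : R) :
  0 <= c -> \sum_(r < n) (if k == r :> nat then c else 0) <= c.
Proof.
move=> c_ge0; have [kn | nk] := ltnP k n.
  rewrite (bigD1 (Ordinal kn)) //= eqxx big1 ?addr0 // => r.
  by rewrite -val_eqE /= eq_sym => /negbTE ->.
by rewrite big1 // => r _; rewrite ifN // neq_ltn (leq_trans (ltn_ord r) nk) orbT.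
Qed.

Lemma div_eighth_pred_le (R : realFieldType) (c : R) D :
  0 <= c -> (1 < D)%N -> c / (8^-1 * D.-1%:R) <= 57 * c / D%:R.
Proof.
move=> c_ge0; case: D => // k; rewrite ltnS => k_gt0 /=.
have k_ge1 : 1 <= k%:R :> R by rewrite ler1n.
have -> : c / (8^-1 * k%:R) = 8 * (c / k%:R) by rewrite invfM invrK mulrCA.
set t := c / k%:R; have t_ge0 : 0 <= t by rewrite divr_ge0.
have -> : c = t * k%:R by rewrite /t divfK // gt_eqF // (lt_le_trans ltr01).
rewrite -addn1 natrD ler_pdivlMr; last by lra.
nra.
Qed.

Section ReversibleChain.
Variables (R : realType) (V : finType) (P : V -> V -> R) (m : V -> R).
Hypotheses (HP0 : forall x y, 0 <= P x y)
  (Hm0 : forall x, 0 <= m x) (Hm1 : \sum_x m x = 1)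
  (Hrev : forall x y, m x * P x y = m y * P y x).

Lemma P_eq0 x y : ~~ (0 < P x y) -> P x y = 0.
Proof. by move=> hxy; apply/eqP; rewrite eq_le HP0 andbT leNgt. Qed.

Lemma bndE W : bnd P m W = \sum_(x in W) \sum_(y in ~: W) m x * P x y.
Proof.
apply: eq_bigr => x hx; apply: eq_bigr => y hy.
have [hxy | /P_eq0 ->] := boolP (0 < P x y); last by rewrite !(mul0r, mulr0).
have x_neq_y : x != y by apply: contraTneq hy => <-; rewrite inE hx.
by rewrite dist_adj ?mulr1n ?mulr1 1?mulrC //; apply/andP.
Qed.

Lemma bnd_setC W : bnd P m (~: W) = bnd P m W.
Proof.
rewrite !bndE finset.setCK exchange_big /=.
by apply: eq_bigr => y _; apply: eq_bigr => x _; rewrite Hrev.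
Qed.

Lemma bnd_ge0 W : 0 <= bnd P m W.
Proof. by rewrite bndE; do 2!apply: sumr_ge0 => ? _; exact: mulr_ge0. Qed.

Lemma cheeger_le_ratio W : W != finset.set0 -> mass m W <= 2^-1 ->
  (cheeger P m <= (bnd P m W / mass m W)%:E)%E.
Proof. by move=> W_neq0 hW; apply: ereal_inf_lbound; exists W. Qed.

Lemma cheeger_le_balanced eps W : 0 < eps -> eps <= mass m W -> mass m W <= 1 - eps ->
  (cheeger P m <= (bnd P m W / eps)%:E)%E.
Proof.
move=> eps_gt0 hlo hhi.
have small U : eps <= mass m U -> mass m U <= 2^-1 ->
    (cheeger P m <= (bnd P m U / eps)%:E)%E.
  move=> hU hU2; have U_gt0 : 0 < mass m U by exact: lt_le_trans hU.
  apply: le_trans (cheeger_le_ratio (mass_gt0_neq0 U_gt0) hU2) _.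
  by rewrite lee_fin ler_wpM2l ?bnd_ge0 // lef_pV2 ?posrE.
have [hW | hW] := lerP (mass m W) 2^-1; first exact: small.
by rewrite -bnd_setC; apply: small; rewrite (mass_setC Hm1); lra.
Qed.

Definition deg x := \sum_(y | y != x) P x y.

Lemma deg_ge0 x : 0 <= deg x.
Proof. by apply: sumr_ge0 => y _. Qed.

Lemma deg_le_degmax x : deg x <= degmax P.
Proof. exact: (le_bigmax _ deg x). Qed.

Lemma degmax_ge0 : 0 <= degmax P.
Proof. exact: bigmax_ge_id. Qed.

Lemma bnd_sublevel_le A r : bnd P m (sublevel P A r) <=
  \sum_x (if dist_to P A x == r then m x * deg x else 0).
Proof.
rewrite bndE big_mkcond /=; apply: ler_sum => x _.
case: ifPn => hx; last by case: ifP => // _; exact: mulr_ge0 (Hm0 x) (deg_ge0 x).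
case: ifPn => [hxr | hxr].
  rewrite /deg mulr_sumr [leLHS]big_mkcond [leRHS]big_mkcond; apply: ler_sum => y _.
  case: ifPn => hy; last by case: ifP => // _; exact: mulr_ge0.
  by rewrite ifT //; apply: contraTneq hy => ->; rewrite finset.in_setC hx.
rewrite big1 // => y; rewrite inE => hy; rewrite P_eq0 ?mulr0 //.
by apply: contra hxr => hxy; rewrite (sublevel_boundary_edge hx hy hxy).
Qed.

Lemma sum_bnd_sublevel_le A n : \sum_(r < n) bnd P m (sublevel P A r) <= degmax P.
Proof.
apply: (@le_trans _ _
  (\sum_(r < n) \sum_x (if dist_to P A x == r then m x * deg x else 0))).
  by apply: ler_sum => r _; exact: bnd_sublevel_le.
rewrite exchange_big /=; apply: (@le_trans _ _ (\sum_x m x * deg x)).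
  by apply: ler_sum => x _; exact/sumr_ord_eq_le/mulr_ge0/deg_ge0.
rewrite -[degmax P]mul1r -Hm1 mulr_suml; apply: ler_sum => x _.
exact: ler_wpM2l (deg_le_degmax x).
Qed.

Lemma cheeger_le_setdist eps A B : 0 < eps -> (1 < setdist P A B)%N ->
  eps <= mass m A -> eps <= mass m (cl P B) ->
  (cheeger P m <= (degmax P / (eps * (setdist P A B).-1%:R))%:E)%E.
Proof.
move=> eps_gt0 hD hA hB; set n := (setdist P A B).-1.
have n_gt0 : (0 < n)%N by rewrite /n; lia.
have [r hr] := exists_ord_le_mean n_gt0 (sum_bnd_sublevel_le A n).
have hlo : eps <= mass m (sublevel P A r).
  exact: le_trans hA (mass_subset Hm0 (subset_sublevel P A r)).
have hhi : mass m (sublevel P A r) <= 1 - eps.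
  have r_lt : (r.+1 < setdist P A B)%N by have := ltn_ord r; rewrite /n; lia.
  have := mass_subset Hm0 (sublevel_subset_setC_cl r_lt).
  by rewrite (mass_setC Hm1); lra.
apply: le_trans (cheeger_le_balanced eps_gt0 hlo hhi) _.
by rewrite lee_fin [eps * _]mulrC invfM mulrA ler_pM2r ?invr_gt0.
Qed.

Lemma setdist_le_diam_obs eps A B : eps <= mass m A -> eps <= mass m (cl P B) ->
  (setdist P A B <= diam_obs P m eps)%N.
Proof.
move=> hA hB.
by apply: (@leq_bigmax_cond _ _ (fun AB => setdist P AB.1 AB.2) (A, B)); rewrite /= hA hB.
Qed.

Lemma diam_obs_attained eps : eps <= 1 -> exists A B,
  [/\ eps <= mass m A, eps <= mass m (cl P B) & diam_obs P m eps = setdist P A B].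
Proof.
move=> eps_le1; have hT : (eps <= mass m [set: V]) && (eps <= mass m (cl P [set: V])).
  by rewrite /cl finset.setTU (mass_setT Hm1) eps_le1.
rewrite /diam_obs (bigop.bigmax_eq_arg ([set: V], [set: V])) //.
by case: arg_maxnP => // -[A B] /= /andP [hA hB] _; exists A, B.
Qed.

Section Connected.
Hypotheses (HV : (1 < #|V|)%N) (Hsupp : forall x y, (0 < P x y) = (0 < P y x))
  (Hconn : forall x y, connect (adj P) x y).

Lemma mass_eq0_adj x y : m x = 0 -> adj P x y -> m y = 0.
Proof.
move=> mx0 /andP [_ hxy]; have hyx : 0 < P y x by rewrite -Hsupp.
apply/eqP; move: (Hrev x y); rewrite mx0 mul0r => /esym/eqP.
by rewrite mulf_eq0 (gt_eqF hyx) orbF.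
Qed.

Lemma m_gt0 x : 0 < m x.
Proof.
rewrite lt0r Hm0 andbT; apply/eqP => mx0.
suff m0 y : m y = 0 by move: Hm1; rewrite big1 // => /esym/eqP; rewrite oner_eq0.
have /connectP [p hp ->] := Hconn x y.
elim: p x mx0 hp => //= z p IH x mx0 /andP [hxz hp].
exact: IH (mass_eq0_adj mx0 hxz) hp.
Qed.

Lemma exists_adj x : exists y, adj P x y.
Proof.
have [y y_neq_x] : exists y, y != x.
  have [a [b [_ _ ab]]] := card_gt1P HV.
  by have [<- | ] := eqVneq a x; [exists b; rewrite eq_sym | exists a].
have /connectP [[|z p] /= hp hy] := Hconn x y; first by rewrite hy eqxx in y_neq_x.
by case/andP: hp => hxz _; exists z.
Qed.

Lemma cheeger_le_degmax : (cheeger P m <= (degmax P)%:E)%E.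
Proof.
have [z mz] : exists z, m z <= 2^-1.
  have [x [y [_ _ xy]]] := card_gt1P HV.
  have : m x + m y <= 1.
    by rewrite -Hm1 (bigD1 x) //= (bigD1 y) 1?eq_sym //= addrA lerDl sumr_ge0.
  have := Hm0 x; have := Hm0 y.
  by case: (lerP (m x) 2^-1) => hx; [exists x | exists y]; lra.
have z_neq0 : [set z] != finset.set0 :> {set V} by apply/set0Pn; exists z; rewrite inE.
apply: le_trans (cheeger_le_ratio z_neq0 _) _; first by rewrite /mass big_set1.
rewrite lee_fin bndE /mass !big_set1 -mulr_sumr mulrC mulKf ?gt_eqF ?m_gt0 //.
by rewrite (eq_bigl (fun y => y != z)) ?deg_le_degmax // => y; rewrite !inE.
Qed.

Lemma diam_obs_gt0 eps : 0 < eps -> eps <= 3^-1 -> (0 < diam_obs P m eps)%N.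
Proof.
move=> eps_gt0 eps_le.
suff [A hA hB] : exists2 A, eps <= mass m A & eps <= mass m (cl P (~: A)).
  apply: leq_trans (setdist_le_diam_obs hA hB).
  by apply: setdist_setC_gt0; lia.
have eps_le1 : eps <= 1 by lra.
have [A hA hmin] := minimal_heavy_set Hm1 eps_le1.
have /set0Pn [a ha] := mass_gt0_neq0 (lt_le_trans eps_gt0 hA).
have [hAc | hAc] := lerP (mass m A) (1 - eps).
  exists A => //; apply: le_trans (mass_subset Hm0 (finset.subsetUl _ _)).
  by rewrite (mass_setC Hm1); lra.
exists [set a]; last by rewrite cl_setC1 ?(mass_setT Hm1); [lra | exact: exists_adj].
have := hmin a ha; rewrite /mass big_set1.
by rewrite /mass (big_setD1 a ha) /= in hAc; lra.
Qed.

End Connected.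

End ReversibleChain.

Theorem theorem6p4 (R : realType) (V : finType) (P : V -> V -> R) (m : V -> R)
  (HV : (1 < #|V|)%N)
  (HP0 : forall x y, 0 <= P x y)
  (Hsupp : forall x y, (0 < P x y) = (0 < P y x))
  (Hconn : forall x y, connect (adj P) x y)
  (Hm0 : forall x, 0 <= m x)
  (Hm1 : \sum_x m x = 1)
  (Hrev : forall x y, m x * P x y = m y * P y x) :
  (cheeger P m <= ((57 * degmax P) / (diam_obs P m (8^-1))%:R)%:E)%E.
Proof.
have eighth_gt0 : 0 < 8^-1 :> R by rewrite invr_gt0.
have eighth_le : 8^-1 <= 3^-1 :> R by lra.
have eighth_le1 : 8^-1 <= 1 :> R by lra.
have D_gt0 := diam_obs_gt0 Hm0 Hm1 HV Hconn eighth_gt0 eighth_le.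
have [A [B [hA hB hD]]] := diam_obs_attained P Hm1 eighth_le1.
rewrite hD in D_gt0 *; have [D_gt1 | D_le1] := ltnP 1 (setdist P A B).
  apply: le_trans (cheeger_le_setdist HP0 Hm0 Hm1 Hrev eighth_gt0 D_gt1 hA hB) _.
  by rewrite lee_fin; exact: div_eighth_pred_le (degmax_ge0 P) D_gt1.
have -> : setdist P A B = 1%N by apply/anti_leq; rewrite D_le1 D_gt0.
apply: le_trans (cheeger_le_degmax HP0 Hm0 Hm1 Hrev HV Hsupp Hconn) _.
by rewrite lee_fin mulr1n divr1; have := degmax_ge0 P; lra.
Qed.
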